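(* Let $L\in\{4,5\}$ and let $w:\{0,1\}^L\to\mathbb{R}_{\ge 0}$ be a generic fitness landscape that induces a staircase triangulation of $[0,1]^L$. Then the fitness landscape has at most four peaks.
   Context: Genotypes $g\in\{0,1\}^L$ are identified with vertices of $[0,1]^L$. The triangulation induced by $w$ is the regular subdivision of $[0,1]^L$ obtained by projecting onto $[0,1]^L$ the upper faces of $\mathrm{conv}\{(g,w_g)\}\subset\mathbb{R}^{L+1}$; $w$ is generic if all $w_g$ are distinct and this subdivision is a triangulation. A peak is a genotype all of whose Hamming-distance-$1$ neighbours have strictly lower fitness. The standard staircase triangulation consists of the $L!$ simplices $\{g_0,g_1,\dots,g_L\}$ where $g_0=0\cdots0$, $g_L=1\cdots1$, and each $g_{k+1}$ is obtained from $g_k$ by changing one $0$ to $1$. A staircase triangulation is any image of the standard staircase triangulation under a symmetry of the cube (coordinate permutations and bit flips). *)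

From HB Require Import structures.
From mathcomp Require Import all_boot all_order all_fingroup all_algebra.
From mathcomp Require Import reals.
Set Implicit Arguments. Unset Strict Implicit. Unset Printing Implicit Defensive.
Import Order.TTheory GRing.Theory Num.Theory.
Local Open Scope ring_scope.

Definition genotype (L : nat) := {ffun 'I_L -> bool}.

Definition hamming_neighbour (L : nat) (g h : genotype L) : bool :=
  #|[set i | g i != h i]| == 1%N.

Definition peak (R : realType) (L : nat) (w : genotype L -> R) (g : genotype L) : bool :=
  [forall h : genotype L, hamming_neighbour g h ==> (w h < w g)].

Definition affine_at (R : realType) (L : nat) (a : 'I_L -> R) (b : R) (g : genotype L) : R :=
  \sum_(i < L) a i * (g i)%:R + b.

Definition full_dim (R : realType) (L : nat) (S : {set genotype L}) : Prop :=
  forall (c : 'I_L -> R) (d : R),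
    (forall g, g \in S -> \sum_(i < L) c i * (g i)%:R = d) -> forall i, c i = 0.

(* S is (the vertex set of) a maximal cell of the regular subdivision induced by w:
   it is the set of lifted points (g, w g) on a non-vertical upper supporting
   hyperplane x_{L+1} = a.x + b, and its projection is full-dimensional. *)
Definition upper_cell (R : realType) (L : nat) (w : genotype L -> R)
    (S : {set genotype L}) : Prop :=
  exists (a : 'I_L -> R) (b : R),
    (forall g, w g <= affine_at a b g) /\
    (forall g, g \in S <-> w g = affine_at a b g) /\
    full_dim R S.

Definition generic (R : realType) (L : nat) (w : genotype L -> R) : Prop :=
  injective w /\ (forall S, upper_cell w S -> #|S| = L.+1).

Definition induces (R : realType) (L : nat) (w : genotype L -> R)
    (T : {set {set genotype L}}) : Prop :=
  forall S, upper_cell w S <-> S \in T.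

(* Standard staircase triangulation: for each permutation s, the chain
   g_k i = (s i < k), k = 0..L, from 0...0 to 1...1 adding one 1 per step. *)
Definition staircase_simplex (L : nat) (s : 'S_L) : {set genotype L} :=
  [set [ffun i => (s i < k)%N] | k : ordinal L.+1].

Definition standard_staircase (L : nat) : {set {set genotype L}} :=
  [set staircase_simplex s | s : 'S_L].

Definition cube_sym (L : nat) (p : 'S_L) (f : {ffun 'I_L -> bool}) (g : genotype L)
    : genotype L :=
  [ffun i => g (p i) (+) f i].

Definition staircase_triangulation (L : nat) (T : {set {set genotype L}}) : Prop :=
  exists (p : 'S_L) (f : {ffun 'I_L -> bool}),
    T = [set (cube_sym p f) @: S | S : {set genotype L} in standard_staircase L].

From HB Require Import structures.
From mathcomp Require Import all_boot all_order all_fingroup all_algebra.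
From mathcomp Require Import reals.
Set Implicit Arguments. Unset Strict Implicit. Unset Printing Implicit Defensive.
Import Order.TTheory GRing.Theory Num.Theory.

(* After a cube symmetry the triangulation is the standard staircase, whose
   simplices are the maximal chains of the Boolean lattice {0,1}^L.  For
   incomparable x and y the chain x /\ y < x < x \/ y lies in a simplex
   omitting y; the affine function of that cell agrees with w on the chain, is
   strictly above w at y, and is modular, so w x + w y < w (x /\ y) + w (x \/ y).
   Hence two peaks are never adjacent, and x /\ y is never a neighbour of a
   peak x when y is another peak not below x: then x \/ y would be a neighbour
   of y, and these two neighbours, each lower than its peak, would violate the
   inequality.  An exhaustive search shows that for L = 4, 5 no five
   genotypes are pairwise compatible in this sense. *)

Section Genotypes.
Variable L : nat.
Implicit Types (x y g h : genotype L) (p : 'S_L) (f : {ffun 'I_L -> bool}).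

Definition gmeet x y : genotype L := [ffun i => x i && y i].
Definition gjoin x y : genotype L := [ffun i => x i || y i].
Definition gsubset x y := [forall i, x i ==> y i].

Lemma hamming_neighbourC x y : hamming_neighbour x y = hamming_neighbour y x.
Proof.
by rewrite /hamming_neighbour; congr (_ == _); apply: eq_card => i; rewrite !inE eq_sym.
Qed.

Lemma cube_sym_inj p f : injective (cube_sym p f).
Proof.
move=> x y /ffunP E; apply/ffunP => j; have := E (p^-1 j)%g.
by rewrite !ffunE permKV; case: (f _) (x j) (y j) => [] [] [].
Qed.

Lemma hamming_neighbour_cube_sym p f x y :
  hamming_neighbour (cube_sym p f x) (cube_sym p f y) = hamming_neighbour x y.
Proof.
rewrite /hamming_neighbour -(card_preimset [set j | x j != y j] (@perm_inj _ p)).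
congr (_ == _); apply: eq_card => i; rewrite !inE !ffunE.
by case: (f i) (x (p i)) (y (p i)) => [] [] [].
Qed.

Lemma cube_sym_modular p f x y i :
  (cube_sym p f x i + cube_sym p f y i =
   cube_sym p f (gmeet x y) i + cube_sym p f (gjoin x y) i)%N.
Proof. by rewrite !ffunE; case: (x (p i)) (y (p i)) (f i) => [] [] []. Qed.

Definition covers_meet x y :=
  (#|[set i | x i && ~~ y i]| == 1%N) && (0 < #|[set i | y i && ~~ x i]|)%N.

Definition peak_compatible x y :=
  [&& x != y, ~~ hamming_neighbour x y, ~~ covers_meet x y & ~~ covers_meet y x].

Lemma covers_meet_neighbours x y : covers_meet x y ->
  [/\ hamming_neighbour x (gmeet x y), hamming_neighbour y (gjoin x y),
      ~~ gsubset x y & ~~ gsubset y x].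
Proof.
case/andP => /cards1P [i xy_i] /card_gt0P [j]; rewrite inE => yx_j.
have : i \in [set k | x k && ~~ y k] by rewrite xy_i set11.
rewrite inE => x_i.
have neighbour g h : (forall k, (g k != h k) = x k && ~~ y k) -> hamming_neighbour g h.
  move=> E; rewrite /hamming_neighbour -(cards1 i) -xy_i.
  by apply/eqP; apply: eq_card => k; rewrite !inE E.
split.
- by apply: neighbour => k; rewrite ffunE; case: (x k) (y k) => [] [].
- by apply: neighbour => k; rewrite ffunE; case: (x k) (y k) => [] [].
- by apply/forallP => /(_ i); case/andP: x_i => -> /negbTE ->.
- by apply/forallP => /(_ j); case/andP: yx_j => -> /negbTE ->.
Qed.

End Genotypes.

Section Ranking.
Variables (L : nat) (key : 'I_L -> nat).
Hypothesis key_inj : injective key.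

Definition rank i := #|[set j | key j < key i]|.

Lemma rank_lt_card i u : (rank i < #|[set j | key j < u]|) = (key i < u).
Proof.
case: (ltnP (key i) u) => [lt_iu | le_ui].
  apply: proper_card; apply/properP; split; last by exists i; rewrite !inE ?lt_iu ?ltnn.
  by apply/subsetP => j; rewrite !inE => /ltn_trans; apply.
rewrite ltnNge subset_leq_card //.
by apply/subsetP => j; rewrite !inE => /leq_trans; apply.
Qed.

Lemma rank_lt i : rank i < L.
Proof.
have := rank_lt_card i (key i).+1; rewrite ltnSn => /leq_trans; apply.
by rewrite -[L in _ <= L]card_ord max_card.
Qed.

Lemma rank_inj : injective rank.
Proof.
have le k l : rank k = rank l -> key k <= key l.
  by move=> E; rewrite -ltnS -rank_lt_card E rank_lt_card ltnSn.
by move=> i j E; apply: key_inj; apply/eqP; rewrite eqn_leq !le.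
Qed.

Definition rank_ord i : 'I_L := Ordinal (rank_lt i).

Lemma rank_ord_inj : injective rank_ord.
Proof. by move=> i j /(congr1 val) /rank_inj. Qed.

Definition rank_perm : 'S_L := perm rank_ord_inj.

Lemma threshold_in_staircase u :
  [ffun i => key i < u] \in staircase_simplex rank_perm.
Proof.
have lt_card : #|[set j | key j < u]| < L.+1.
  by rewrite ltnS -[L in _ <= L]card_ord max_card.
apply/imsetP; exists (Ordinal lt_card) => //; apply/ffunP => i.
by rewrite !ffunE permE rank_lt_card.
Qed.

End Ranking.

Section Staircase.
Variable L : nat.
Implicit Types (x y g h : genotype L) (s : 'S_L).

Lemma thresholds_in_staircase (cls : 'I_L -> nat) :
  exists s, forall t, [ffun i => cls i < t] \in staircase_simplex s.
Proof.
pose key (i : 'I_L) := cls i * L + i.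
have key_inj : injective key.
  move=> i j /(congr1 (modn^~ L)).
  by rewrite /key !modnMDl !modn_small ?ltn_ord // => /val_inj.
exists (rank_perm key_inj) => t.
suff -> : [ffun i => cls i < t] = [ffun i => key i < t * L] by apply: threshold_in_staircase.
apply/ffunP => i; have L_gt0 : 0 < L by apply: leq_ltn_trans (ltn_ord i).
by rewrite !ffunE /key -ltn_divLR // divnMDl // divn_small ?addn0 ?ltn_ord.
Qed.

Lemma meet_join_in_staircase x y : exists s,
  [/\ gmeet x y \in staircase_simplex s, x \in staircase_simplex s
    & gjoin x y \in staircase_simplex s].
Proof.
pose cls i := if x i && y i then 0 else if x i then 1 else if y i then 2 else 3.
have [s Hs] := thresholds_in_staircase cls.
have inS g t : (forall i, g i = (cls i < t)) -> g \in staircase_simplex s.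
  by move=> Hg; rewrite (_ : g = [ffun i => cls i < t]) //; apply/ffunP => i; rewrite ffunE.
exists s; split; [apply: (inS _ 1) | apply: (inS _ 2) | apply: (inS _ 3)] => i;
  by rewrite ?ffunE /cls; case: (x i) (y i) => [] [].
Qed.

Lemma staircase_simplex_total s g h :
  g \in staircase_simplex s -> h \in staircase_simplex s -> gsubset g h || gsubset h g.
Proof.
move=> /imsetP [k1 _ ->] /imsetP [k2 _ ->].
case: (leqP k1 k2) => [le_k | lt_k]; apply/orP; [left | right];
  apply/forallP => i; rewrite !ffunE; apply/implyP => lt_i.
- exact: leq_trans lt_i le_k.
- exact: ltn_trans lt_i lt_k.
Qed.

End Staircase.

Local Open Scope ring_scope.

Section Lifting.
Variables (R : realType) (L : nat).
Implicit Types (w : genotype L -> R) (x y m j : genotype L) (S : {set genotype L})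
  (p : 'S_L) (f : {ffun 'I_L -> bool}).

Lemma affine_at_modular (a : 'I_L -> R) b (u v u' v' : genotype L) :
  (forall i, u i + v i = u' i + v' i)%N ->
  affine_at a b u + affine_at a b v = affine_at a b u' + affine_at a b v'.
Proof.
move=> uv; rewrite /affine_at addrACA [in RHS]addrACA -!big_split /=; congr (_ + _).
by apply: eq_bigr => i _; rewrite -!mulrDr -!natrD uv.
Qed.

Lemma upper_cell_exchange w S x y m j :
  upper_cell w S -> (forall i, x i + y i = m i + j i)%N ->
  x \in S -> y \notin S -> m \in S -> j \in S -> w x + w y < w m + w j.
Proof.
move=> [a [b [below [on_cell _]]]] xymj xS yS mS jS.
have y_lt : w y < affine_at a b y.
  by rewrite lt_neqAle below andbT; apply: contra yS => /eqP /on_cell.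
rewrite (on_cell x).1 // (on_cell m).1 // (on_cell j).1 //.
by rewrite -(affine_at_modular a b xymj) ltrD2l.
Qed.

Definition strictly_supermodular w := forall x y,
  ~~ gsubset x y -> ~~ gsubset y x -> w x + w y < w (gmeet x y) + w (gjoin x y).

Lemma staircase_supermodular w p f :
  induces w [set cube_sym p f @: S | S : {set genotype L} in standard_staircase L] ->
  strictly_supermodular (w \o cube_sym p f).
Proof.
move=> induced x y xy yx /=; set c := cube_sym p f.
have [s [meetS xS joinS]] := meet_join_in_staircase x y.
have cell : upper_cell w (c @: staircase_simplex s).
  by apply/induced; apply: imset_f; apply: imset_f.
have yS : y \notin staircase_simplex s.
  by apply/negP => /(staircase_simplex_total xS); rewrite (negbTE xy) (negbTE yx).
apply: (upper_cell_exchange cell (cube_sym_modular p f x y));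
  by rewrite ?(mem_imset _ _ (@cube_sym_inj _ p f)).
Qed.

End Lifting.

Section Peaks.
Variables (R : realType) (L : nat).
Implicit Types (w : genotype L -> R) (x y h : genotype L).

Lemma peak_neighbour_lt w x h : peak w x -> hamming_neighbour x h -> w h < w x.
Proof. by move=> /forallP /(_ h) /implyP. Qed.

Lemma peak_cube_sym w (p : 'S_L) (f : {ffun 'I_L -> bool}) x :
  peak w (cube_sym p f x) -> peak (w \o cube_sym p f) x.
Proof.
move=> px; apply/forallP => h; apply/implyP => xh.
by apply: peak_neighbour_lt px _; rewrite hamming_neighbour_cube_sym.
Qed.

Lemma peaks_not_neighbours w x y : peak w x -> peak w y -> ~~ hamming_neighbour x y.
Proof.
move=> px py; apply/negP => xy.
have lt_yx := peak_neighbour_lt px xy.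
have yx : hamming_neighbour y x by rewrite hamming_neighbourC.
have lt_xy := peak_neighbour_lt py yx.
by move: (lt_trans lt_xy lt_yx); rewrite ltxx.
Qed.

Lemma supermodular_peaks_compatible w x y : strictly_supermodular w ->
  peak w x -> peak w y -> x != y -> peak_compatible x y.
Proof.
move=> sm px py xy; rewrite /peak_compatible xy (peaks_not_neighbours px py) /=.
have no_cover u v : peak w u -> peak w v -> ~~ covers_meet u v.
  move=> pu pv; apply/negP => /covers_meet_neighbours [nu nv uv vu].
  have := ltrD (peak_neighbour_lt pu nu) (peak_neighbour_lt pv nv).
  by rewrite ltNge (ltW (sm _ _ uv vu)).
by rewrite !no_cover.
Qed.

End Peaks.

Section Cliques.
Variables (T : eqType) (r : rel T).

Fixpoint has_clique n (U : seq T) : bool :=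
  if n is n'.+1 then has (fun x => has_clique n' [seq y <- U | r x y]) U else true.

Lemma clique_has_clique n (A U : seq T) :
  uniq A -> {subset A <= U} -> {in A &, forall x y, x != y -> r x y} ->
  (n <= size A)%N -> has_clique n U.
Proof.
elim: n A U => [//|n IH] [//|x A] U /= /andP [xA uniqA] AU rA.
rewrite ltnS => sizeA; apply/hasP; exists x; first by rewrite AU ?mem_head.
apply: IH uniqA _ _ sizeA => [y yA | y z yA zA yz].
- rewrite mem_filter AU ?inE ?yA ?orbT // andbT.
  by apply: rA; rewrite ?inE ?eqxx ?yA ?orbT //; apply: contraNneq xA => ->.
- by apply: rA; rewrite ?inE ?yA ?zA ?orbT.
Qed.

End Cliques.

Fixpoint bitseqs n : seq (seq bool) :=
  if n is n'.+1 then [seq b :: s | b <- [:: true; false], s <- bitseqs n'] else [:: [::]].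

Lemma mem_bitseqs n s : size s = n -> s \in bitseqs n.
Proof.
elim: n s => [|n IH] [|b s] //= [] /IH s_in.
by case: b; rewrite mem_cat ?cats0 (map_f _ s_in) ?orbT.
Qed.

Definition count_pairs (P : bool -> bool -> bool) (s t : seq bool) :=
  count (fun b => P b.1 b.2) (zip s t).

Definition covers_meet_seq s t :=
  (count_pairs (fun a b => a && ~~ b) s t == 1%N) &&
  (0 < count_pairs (fun a b => b && ~~ a) s t)%N.

(* [peak_compatible] on bit lists, where [vm_compute] runs the search quickly. *)
Definition peak_compatible_seq s t :=
  [&& s != t, count_pairs (fun a b => a != b) s t != 1%N,
      ~~ covers_meet_seq s t & ~~ covers_meet_seq t s].

Lemma no_compatible_5clique_seq n :
  (n == 4) || (n == 5) -> ~~ has_clique peak_compatible_seq 5 (bitseqs n).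
Proof. by case/orP => /eqP ->; vm_compute. Qed.

Section BitLists.
Variable L : nat.
Implicit Types x y : genotype L.

Lemma codom_genotype_inj : injective (fun g : genotype L => codom g).
Proof. by move=> x y; rewrite !codom_ffun => /val_inj /(can_inj fgraphK). Qed.

Lemma count_pairs_codom P x y :
  count_pairs P (codom x) (codom y) = #|[set i | P (x i) (y i)]|.
Proof. by rewrite /count_pairs !codomE zip_map count_map cardsE cardE -size_filter enumT. Qed.

Lemma peak_compatible_codom x y :
  peak_compatible_seq (codom x) (codom y) = peak_compatible x y.
Proof.
by rewrite /peak_compatible_seq /covers_meet_seq !count_pairs_codom (inj_eq codom_genotype_inj).
Qed.

Lemma pairwise_compatible_card_le4 (Q : {set genotype L}) :
  (L == 4%N) || (L == 5%N) -> {in Q &, forall x y, x != y -> peak_compatible x y} ->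
  (#|Q| <= 4)%N.
Proof.
move=> L45 compatQ; rewrite leqNgt.
apply: (contraNN _ (no_compatible_5clique_seq L45)) => card_gt4.
apply: (@clique_has_clique _ _ _ [seq codom (g : genotype L) | g <- enum Q]).
- by rewrite map_inj_uniq ?enum_uniq //; apply: codom_genotype_inj.
- by move=> _ /mapP [g _ ->]; rewrite mem_bitseqs // size_codom card_ord.
- move=> _ _ /mapP [x xQ ->] /mapP [y yQ ->].
  rewrite (inj_eq codom_genotype_inj) peak_compatible_codom.
  by apply: compatQ; rewrite -mem_enum.
- by rewrite size_map -cardE.
Qed.

End BitLists.

Theorem theorem2 (R : realType) (L : nat) (w : genotype L -> R)
    (hL : (L == 4%N) || (L == 5%N))
    (hw0 : forall g, 0 <= w g)
    (hgen : generic w)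
    (hstair : exists T : {set {set genotype L}},
                staircase_triangulation T /\ induces w T) :
  (#|[set g : genotype L | peak w g]| <= 4)%N.
Proof.
case: hstair => _ [[p [f ->]] induced].
have supermodular := staircase_supermodular induced.
rewrite -(card_preimset _ (@cube_sym_inj _ p f)).
apply: (pairwise_compatible_card_le4 hL) => x y; rewrite !inE => px py.
exact: supermodular_peaks_compatible supermodular (peak_cube_sym px) (peak_cube_sym py).
Qed.
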